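(* Let $G\neq0$ and $\Lambda\in\mathbb R$, and let $T(U)=2G\log U+\Lambda\,\mathrm{tr}(\log U)\mathbb 1$ on $\mathrm{PSym}(3)$. Then there exists a differentiable function $W:\mathrm{PSym}(3)\to\mathbb R$ with $T(U)=D W(U)$ (i.e. $\langle T(U),H\rangle=DW(U)[H]$ for all $H\in\mathrm{Sym}(3)$) if and only if $\Lambda=0$ (equivalently, Poisson's ratio $\nu=\frac{\Lambda}{2(\Lambda+G)}$ vanishes). In that case, with normalization $W(\mathbb 1)=0$, $$W(U)=2G\big[\langle U,\log U-\mathbb 1\rangle+3\big]=2G\sum_{i=1}^3\lambda_i(\ln\lambda_i-1)+6G,$$ where $\lambda_i$ are the eigenvalues of $U$.
   Context: $\mathrm{Sym}(3)$: real symmetric $3\times3$ matrices; $\mathrm{PSym}(3)$: symmetric positive definite ones; $\mathbb 1$: identity; $\log$: principal matrix logarithm; $\langle X,Y\rangle=\mathrm{tr}(Y^TX)$. *)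

(* real 3x3 matrices represented as functions nat -> nat -> R,
   only indices 0,1,2 are meaningful. *)
From Stdlib Require Import Reals ClassicalEpsilon.
Open Scope R_scope.

Definition Mat := nat -> nat -> R.

Definition sum3 (f : nat -> R) : R := f 0%nat + f 1%nat + f 2%nat.

Definition meq (A B : Mat) : Prop :=
  forall i j, (i < 3)%nat -> (j < 3)%nat -> A i j = B i j.

Definition mmul (A B : Mat) : Mat := fun i j => sum3 (fun k => A i k * B k j).
Definition transp (A : Mat) : Mat := fun i j => A j i.
Definition madd (A B : Mat) : Mat := fun i j => A i j + B i j.
Definition id3 : Mat := fun i j => if Nat.eqb i j then 1 else 0.
Definition diag3 (l : nat -> R) : Mat := fun i j => if Nat.eqb i j then l i else 0.
Definition mtr (A : Mat) : R := sum3 (fun i => A i i).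

Definition inner (X Y : Mat) : R := mtr (mmul (transp Y) X).
Definition fnorm (H : Mat) : R := sqrt (inner H H).

Definition sym (A : Mat) : Prop :=
  forall i j, (i < 3)%nat -> (j < 3)%nat -> A i j = A j i.
Definition psym (A : Mat) : Prop :=
  sym A /\
  forall x : nat -> R, ~ (x 0%nat = 0 /\ x 1%nat = 0 /\ x 2%nat = 0) ->
    0 < sum3 (fun i => sum3 (fun j => x i * A i j * x j)).

Definition orth (Q : Mat) : Prop := meq (mmul (transp Q) Q) id3.

Definition spectral (U Q : Mat) (l : nat -> R) : Prop :=
  orth Q /\ (forall i, (i < 3)%nat -> 0 < l i) /\
  meq U (mmul (mmul Q (diag3 l)) (transp Q)).

Definition is_mlog (U L : Mat) : Prop :=
  exists Q l, spectral U Q l /\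
    meq L (mmul (mmul Q (diag3 (fun i => ln (l i)))) (transp Q)).

Definition mlog (U : Mat) : Mat :=
  epsilon (inhabits (fun _ _ => 0)) (fun L => is_mlog U L).

Definition Tmap (G Lam : R) (U : Mat) : Mat :=
  fun i j => 2 * G * mlog U i j + Lam * mtr (mlog U) * id3 i j.

Definition has_sym_deriv (W : Mat -> R) (U T : Mat) : Prop :=
  forall eps, 0 < eps -> exists delta, 0 < delta /\
    forall H, sym H -> psym (madd U H) -> fnorm H < delta ->
      Rabs (W (madd U H) - W U - inner T H) <= eps * fnorm H.

(* Write U = P diag(u) P^T and U + H = Q diag(v) Q^T, and let w_ij = ((P^T Q)_ij)^2, a doubly
   stochastic matrix. For E(U) = <U, log U - 1> one finds

     E(U + H) - E(U) - <log U, H> = sum_ij w_ij (v_j ln v_j - v_j ln u_i - v_j + u_i),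
     |H|^2 = sum_ij w_ij (v_j - u_i)^2,

   and since 0 <= v ln (v / u) - v + u <= (v - u)^2 / u, E is differentiable with derivative
   log U. Hence 2G (E + 3) is a potential of T when Lambda = 0, and any potential vanishing at
   the identity equals it (integrate the difference along the segment from the identity).
   Conversely, integrating a potential of T along the edges of the rectangle of matrices
   diag(a, b, 1), 1 <= a <= 2, 1 <= b <= 3, gives Lambda (2 ln 2 - ln 3) = 0. *)

From Stdlib Require Import Reals Lra Lia Psatz Setoid Morphisms FunctionalExtensionality
  ClassicalEpsilon Classical.
Open Scope R_scope.

(** * Matrix algebra and the functional calculus *)

Ltac idx3 :=
  let i := fresh "i" in let j := fresh "j" in
  intros i j ? ?;
  destruct i as [|[|[|i]]]; [| | | exfalso; lia];
  (destruct j as [|[|[|j]]]; [| | | exfalso; lia]).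

Lemma sum_sq3_pos x0 x1 x2 :
  ~ (x0 = 0 /\ x1 = 0 /\ x2 = 0) -> 0 < x0 * x0 + x1 * x1 + x2 * x2.
Proof.
  intros Hx.
  destruct (Req_dec x0 0); [destruct (Req_dec x1 0); [destruct (Req_dec x2 0)|]|].
  - tauto.
  - pose proof (Rsqr_pos_lt x2 ltac:(assumption)); unfold Rsqr in *; nra.
  - pose proof (Rsqr_pos_lt x1 ltac:(assumption)); unfold Rsqr in *; nra.
  - pose proof (Rsqr_pos_lt x0 ltac:(assumption)); unfold Rsqr in *; nra.
Qed.

#[export] Instance meq_equiv : Equivalence meq.
Proof.
  split.
  - intros A i j _ _; reflexivity.
  - intros A B H i j Hi Hj; symmetry; auto.
  - intros A B C H1 H2 i j Hi Hj; rewrite H1; auto.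
Qed.

#[export] Instance mmul_meq : Proper (meq ==> meq ==> meq) mmul.
Proof.
  intros A A' HA B B' HB i j Hi Hj; unfold mmul, sum3.
  rewrite !HA, !HB by lia; reflexivity.
Qed.

#[export] Instance transp_meq : Proper (meq ==> meq) transp.
Proof. intros A A' H i j Hi Hj; unfold transp; auto. Qed.

#[export] Instance inner_meq : Proper (meq ==> meq ==> eq) inner.
Proof.
  intros X X' HX Y Y' HY; unfold inner, mtr, mmul, transp, sum3.
  rewrite !HX, !HY by lia; reflexivity.
Qed.

Lemma mmulA A B C : mmul (mmul A B) C = mmul A (mmul B C).
Proof. extensionality i; extensionality j; unfold mmul, sum3; ring. Qed.

Lemma transp_mmul A B : transp (mmul A B) = mmul (transp B) (transp A).
Proof. extensionality i; extensionality j; unfold transp, mmul, sum3; ring. Qed.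

Lemma mmul1m A : meq (mmul id3 A) A.
Proof. idx3; unfold mmul, sum3, id3; simpl; ring. Qed.

Lemma mmulm1 A : meq (mmul A id3) A.
Proof. idx3; unfold mmul, sum3, id3; simpl; ring. Qed.

Lemma inner_self_ge0 X : 0 <= inner X X.
Proof.
  unfold inner, mtr, mmul, transp, sum3.
  assert (Hsq : forall a b, 0 <= X a b * X a b) by (intros; apply Rle_0_sqr).
  pose proof (Hsq 0%nat 0%nat); pose proof (Hsq 0%nat 1%nat); pose proof (Hsq 0%nat 2%nat);
  pose proof (Hsq 1%nat 0%nat); pose proof (Hsq 1%nat 1%nat); pose proof (Hsq 1%nat 2%nat);
  pose proof (Hsq 2%nat 0%nat); pose proof (Hsq 2%nat 1%nat); pose proof (Hsq 2%nat 2%nat).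
  lra.
Qed.

Lemma inner_self_eq0 X : inner X X = 0 -> meq X (fun _ _ => 0).
Proof.
  unfold inner, mtr, mmul, transp, sum3; intros H0.
  assert (Hsq : forall a b, 0 <= X a b * X a b) by (intros; apply Rle_0_sqr).
  pose proof (Hsq 0%nat 0%nat); pose proof (Hsq 0%nat 1%nat); pose proof (Hsq 0%nat 2%nat);
  pose proof (Hsq 1%nat 0%nat); pose proof (Hsq 1%nat 1%nat); pose proof (Hsq 1%nat 2%nat);
  pose proof (Hsq 2%nat 0%nat); pose proof (Hsq 2%nat 1%nat); pose proof (Hsq 2%nat 2%nat).
  idx3; apply Rsqr_0_uniq; unfold Rsqr; simpl in *; lra.
Qed.

Lemma fnorm_sq H : fnorm H ^ 2 = inner H H.
Proof. unfold fnorm; rewrite <- Rsqr_pow2; apply Rsqr_sqrt, inner_self_ge0. Qed.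

(* [|Q Q^T - 1|^2 = |Q^T Q - 1|^2] is a polynomial identity. *)
Lemma orth_transp Q : orth Q -> orth (transp Q).
Proof.
  intros HQ; unfold orth; change (transp (transp Q)) with Q.
  set (X := fun i j => mmul Q (transp Q) i j - id3 i j).
  assert (HX : inner X X = inner (fun i j => mmul (transp Q) Q i j - id3 i j)
                                 (fun i j => mmul (transp Q) Q i j - id3 i j))
    by (unfold X, inner, mtr, mmul, transp, id3, sum3; simpl; ring).
  assert (Z : meq (fun i j => mmul (transp Q) Q i j - id3 i j) (fun _ _ => 0))
    by (intros i j Hi Hj; rewrite HQ by auto; ring).
  rewrite Z in HX.
  pose proof (inner_self_eq0 X ltac:(rewrite HX; unfold inner, mtr, mmul, transp, sum3; ring)) as E.
  intros i j Hi Hj; specialize (E i j Hi Hj); unfold X in E; lra.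
Qed.

Lemma orth_mmul P Q : orth P -> orth Q -> orth (mmul P Q).
Proof.
  unfold orth; intros HP HQ.
  rewrite transp_mmul, mmulA, <- (mmulA (transp P)), HP, mmul1m; exact HQ.
Qed.

Lemma orth_mmulT Q : orth Q -> meq (mmul Q (transp Q)) id3.
Proof. apply orth_transp. Qed.

Lemma orth_id3 : orth id3.
Proof. unfold orth; idx3; unfold mmul, transp, id3, sum3; simpl; ring. Qed.

Definition qdiag (Q : Mat) (a : nat -> R) : Mat := mmul (mmul Q (diag3 a)) (transp Q).

Lemma mmul_diag3_l a A i j : (i < 3)%nat -> mmul (diag3 a) A i j = a i * A i j.
Proof. intros Hi; destruct i as [|[|[|i]]]; [| | |lia]; unfold mmul, sum3, diag3; simpl; ring. Qed.

Lemma mmul_diag3_r a A i j : (j < 3)%nat -> mmul A (diag3 a) i j = A i j * a j.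
Proof. intros Hj; destruct j as [|[|[|j]]]; [| | |lia]; unfold mmul, sum3, diag3; simpl; ring. Qed.

Lemma diag3_intertwine (f : R -> R) a b C :
  meq (mmul (diag3 a) C) (mmul C (diag3 b)) ->
  meq (mmul (diag3 (fun i => f (a i))) C) (mmul C (diag3 (fun j => f (b j)))).
Proof.
  intros H i j Hi Hj; specialize (H i j Hi Hj).
  rewrite !mmul_diag3_l, !mmul_diag3_r in * by auto.
  destruct (Req_dec (C i j) 0) as [Z|NZ].
  - rewrite Z; ring.
  - replace (b j) with (a i) by (apply (Rmult_eq_reg_r (C i j)); lra); ring.
Qed.

Lemma qdiag_conj Q a : orth Q -> meq (mmul (mmul (transp Q) (qdiag Q a)) Q) (diag3 a).
Proof.
  unfold orth, qdiag; intros HQ.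
  rewrite !mmulA, HQ, mmulm1, <- mmulA, HQ, mmul1m; reflexivity.
Qed.

Lemma id3_qdiag Q : orth Q -> meq id3 (qdiag Q (fun _ => 1)).
Proof.
  intros HQ; unfold qdiag; rewrite <- (orth_mmulT Q HQ).
  apply mmul_meq; [|reflexivity].
  rewrite <- (mmulm1 Q) at 1; apply mmul_meq; [reflexivity|].
  idx3; reflexivity.
Qed.

(* [C = P^T Q] intertwines [diag a] and [diag b]; an entry of [C] can only be nonzero when
   [a i = b j], so [C] also intertwines [diag (f o a)] and [diag (f o b)]. *)
Lemma qdiag_comp_meq (f : R -> R) P a Q b : orth P -> orth Q ->
  meq (qdiag P a) (qdiag Q b) ->
  meq (qdiag P (fun i => f (a i))) (qdiag Q (fun i => f (b i))).
Proof.
  intros HP HQ E.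
  pose proof (orth_mmulT P HP) as HP'; pose proof (orth_mmulT Q HQ) as HQ'.
  set (C := mmul (transp P) Q).
  assert (EQ : meq Q (mmul P C)) by (unfold C; rewrite <- mmulA, HP', mmul1m; reflexivity).
  assert (HC : meq (mmul C (transp C)) id3).
  { unfold C; rewrite transp_mmul, mmulA, <- (mmulA Q), HQ', mmul1m; exact HP. }
  assert (Hab : meq (mmul (diag3 a) C) (mmul C (diag3 b))).
  { transitivity (mmul (transp P) (mmul (qdiag P a) Q)).
    - rewrite <- (qdiag_conj P a HP); unfold C, qdiag.
      rewrite !mmulA, <- (mmulA P (transp P) Q), HP', mmul1m; reflexivity.
    - rewrite E, <- (qdiag_conj Q b HQ); unfold C, qdiag.
      rewrite !mmulA, <- (mmulA Q (transp Q)), HQ', mmul1m; reflexivity. }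
  pose proof (diag3_intertwine f a b C Hab) as Hf.
  unfold qdiag; rewrite EQ, transp_mmul, !mmulA, <- (mmulA C (diag3 _)), <- Hf,
    !mmulA, <- (mmulA C (transp C)), HC, mmul1m.
  reflexivity.
Qed.

Lemma mlog_spectral U Q l : spectral U Q l -> meq (mlog U) (qdiag Q (fun i => ln (l i))).
Proof.
  intros HS; unfold mlog.
  destruct (epsilon_spec (inhabits (fun _ _ => 0)) (fun L => is_mlog U L))
    as [Q' [l' [[HQ' [_ HU']] HL]]].
  { exists (qdiag Q (fun i => ln (l i))), Q, l; split; [exact HS|reflexivity]. }
  destruct HS as [HQ [_ HU]].
  rewrite HL; apply qdiag_comp_meq; auto.
  change (meq (qdiag Q' l') (qdiag Q l)); rewrite <- HU', <- HU; reflexivity.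
Qed.

Lemma psym_diag3 l : (forall i, (i < 3)%nat -> 0 < l i) -> psym (diag3 l).
Proof.
  intros Hl; split.
  - unfold sym; idx3; reflexivity.
  - intros x Hx; pose proof (sum_sq3_pos _ _ _ Hx) as Hs.
    pose proof (Hl 0%nat ltac:(lia)); pose proof (Hl 1%nat ltac:(lia)); pose proof (Hl 2%nat ltac:(lia)).
    pose proof (Rle_0_sqr (x 0%nat)); pose proof (Rle_0_sqr (x 1%nat)); pose proof (Rle_0_sqr (x 2%nat)).
    unfold Rsqr, diag3, sum3 in *; simpl.
    assert (Hmin : 0 < Rmin (l 0%nat) (Rmin (l 1%nat) (l 2%nat))) by (repeat apply Rmin_pos; auto).
    pose proof (Rmin_l (l 0%nat) (Rmin (l 1%nat) (l 2%nat))).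
    pose proof (Rmin_r (l 0%nat) (Rmin (l 1%nat) (l 2%nat))).
    pose proof (Rmin_l (l 1%nat) (l 2%nat)); pose proof (Rmin_r (l 1%nat) (l 2%nat)).
    nra.
Qed.

Lemma spectral_diag3 l : (forall i, (i < 3)%nat -> 0 < l i) -> spectral (diag3 l) id3 l.
Proof.
  intros Hl; split; [exact orth_id3|split; [exact Hl|]].
  idx3; unfold qdiag, mmul, transp, id3, diag3, sum3; simpl; ring.
Qed.

Lemma mlog_diag3 l : (forall i, (i < 3)%nat -> 0 < l i) ->
  meq (mlog (diag3 l)) (diag3 (fun i => ln (l i))).
Proof.
  intros Hl; rewrite (mlog_spectral _ _ _ (spectral_diag3 l Hl)).
  idx3; unfold qdiag, mmul, transp, id3, diag3, sum3; simpl; ring.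
Qed.

(** * Spectral decomposition *)

Lemma cubic_has_root p q r : exists x, x ^ 3 + p * x ^ 2 + q * x + r = 0.
Proof.
  set (K := 1 + Rabs p + Rabs q + Rabs r).
  pose proof (Rabs_pos p); pose proof (Rabs_pos q); pose proof (Rabs_pos r).
  pose proof (Rle_abs p); pose proof (Rle_abs q); pose proof (Rle_abs r).
  pose proof (Rle_abs (- p)); pose proof (Rle_abs (- q)); pose proof (Rle_abs (- r)).
  rewrite !Rabs_Ropp in *.
  assert (HK : 1 <= K) by (unfold K; lra).
  assert (HK2 : K <= K ^ 2) by nra.
  assert (EK : K ^ 3 - (Rabs p + Rabs q + Rabs r) * K ^ 2 = K ^ 2) by (unfold K; ring).
  set (f := fun x => x ^ 3 + p * x ^ 2 + q * x + r).
  assert (Hpos : 0 < f K) by (unfold f; nra).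
  assert (Hneg : f (- K) < 0) by (unfold f; nra).
  destruct (IVT f (- K) K ltac:(unfold f; reg) ltac:(lra) Hneg Hpos) as [x [_ Hx]].
  now exists x.
Qed.

(* Some column of the adjugate spans the kernel unless the adjugate vanishes; in that case
   the matrix has rank at most one and one of the listed vectors is orthogonal to all rows. *)
Lemma sym3_singular_kernel a b c d e f :
  a * (d * f - e * e) - b * (b * f - e * c) + c * (b * e - d * c) = 0 ->
  exists x0 x1 x2, ~ (x0 = 0 /\ x1 = 0 /\ x2 = 0) /\
    a * x0 + b * x1 + c * x2 = 0 /\ b * x0 + d * x1 + e * x2 = 0 /\ c * x0 + e * x1 + f * x2 = 0.
Proof.
  intros Hdet.
  destruct (classic (d * f - e * e = 0 /\ c * e - b * f = 0 /\ b * e - c * d = 0))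
    as [[z00 [z01 z02]]|NZ].
  2:{ exists (d * f - e * e), (c * e - b * f), (b * e - c * d); split; [exact NZ|]; repeat split; lra. }
  destruct (classic (c * e - b * f = 0 /\ a * f - c * c = 0 /\ b * c - a * e = 0))
    as [[_ [z11 z12]]|NZ].
  2:{ exists (c * e - b * f), (a * f - c * c), (b * c - a * e); split; [exact NZ|]; repeat split; lra. }
  destruct (classic (b * e - c * d = 0 /\ b * c - a * e = 0 /\ a * d - b * b = 0))
    as [[_ [_ z22]]|NZ].
  2:{ exists (b * e - c * d), (b * c - a * e), (a * d - b * b); split; [exact NZ|]; repeat split; lra. }
  destruct (classic (- c = 0 /\ 0 = 0 /\ a = 0)) as [Y1|NZ].
  2:{ exists (- c), 0, a; split; [exact NZ|]; repeat split; lra. }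
  destruct (classic (0 = 0 /\ - e = 0 /\ d = 0)) as [Y2|NZ].
  2:{ exists 0, (- e), d; split; [exact NZ|]; repeat split; lra. }
  destruct (classic (d = 0 /\ - b = 0 /\ 0 = 0)) as [Y3|NZ].
  2:{ exists d, (- b), 0; split; [exact NZ|]; repeat split; lra. }
  destruct (classic (f = 0 /\ 0 = 0 /\ - c = 0)) as [Y4|NZ].
  2:{ exists f, 0, (- c); split; [exact NZ|]; repeat split; lra. }
  exists 1, 0, 0; split; [lra|]; repeat split; lra.
Qed.

Definition dvec (x y z : R) (i : nat) : R := match i with 0%nat => x | 1%nat => y | _ => z end.

Lemma dvec_pos a b c : 0 < a -> 0 < b -> 0 < c -> forall i, (i < 3)%nat -> 0 < dvec a b c i.
Proof. intros Ha Hb Hc i Hi; destruct i as [|[|[|i]]]; [| | |lia]; auto. Qed.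

Definition mvec (A : Mat) (x : nat -> R) (i : nat) : R := sum3 (fun k => A i k * x k).

(* [lam] is a real root of the characteristic polynomial of [U]. *)
Lemma sym_unit_eigvec U : sym U ->
  exists lam v, sum3 (fun i => v i * v i) = 1 /\
    forall i, (i < 3)%nat -> mvec U v i = lam * v i.
Proof.
  intros sU.
  set (a := U 0%nat 0%nat); set (b := U 0%nat 1%nat); set (c := U 0%nat 2%nat).
  set (d := U 1%nat 1%nat); set (e := U 1%nat 2%nat); set (f := U 2%nat 2%nat).
  assert (s10 : U 1%nat 0%nat = b) by (apply sU; lia).
  assert (s20 : U 2%nat 0%nat = c) by (apply sU; lia).
  assert (s21 : U 2%nat 1%nat = e) by (apply sU; lia).
  destruct (cubic_has_root (- (a + d + f)) (a * d + a * f + d * f - b * b - c * c - e * e)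
     (- (a * (d * f - e * e) - b * (b * f - e * c) + c * (b * e - d * c)))) as [lam Hlam].
  destruct (sym3_singular_kernel (a - lam) b c (d - lam) e (f - lam))
    as [x0 [x1 [x2 [Hx [k0 [k1 k2]]]]]].
  { match type of Hlam with ?cubic = 0 => transitivity (- cubic); [ring|rewrite Hlam; ring] end. }
  pose proof (sum_sq3_pos _ _ _ Hx) as Hxx.
  set (n := sqrt (x0 * x0 + x1 * x1 + x2 * x2)).
  assert (Hn2 : n * n = x0 * x0 + x1 * x1 + x2 * x2) by (apply sqrt_sqrt; lra).
  assert (Hn0 : n <> 0) by (intro Z; rewrite Z in Hn2; lra).
  exists lam, (dvec (x0 / n) (x1 / n) (x2 / n)).
  split.
  - unfold sum3; simpl.
    transitivity ((x0 * x0 + x1 * x1 + x2 * x2) / (n * n)); [field; auto|rewrite Hn2; field; lra].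
  - intros i Hi; unfold mvec, sum3; simpl.
    destruct i as [|[|[|i]]]; [| | |lia]; simpl; rewrite ?s10, ?s20, ?s21; fold a b c d e f.
    all: apply (Rmult_eq_reg_r n); [|exact Hn0]; field_simplify; auto; lra.
Qed.

Definition mk3 (a00 a01 a02 a10 a11 a12 a20 a21 a22 : R) : Mat :=
  fun i j => match i, j with
  | O, O => a00 | O, S O => a01 | O, S (S O) => a02
  | S O, O => a10 | S O, S O => a11 | S O, S (S O) => a12
  | S (S O), O => a20 | S (S O), S O => a21 | S (S O), S (S O) => a22
  | _, _ => 0 end.

Lemma unit_orthogonal v0 v1 v2 : v0 * v0 + v1 * v1 + v2 * v2 = 1 ->
  exists w0 w1 w2, w0 * w0 + w1 * w1 + w2 * w2 = 1 /\ v0 * w0 + v1 * w1 + v2 * w2 = 0.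
Proof.
  intros Hv.
  destruct (Req_dec (v1 * v1 + v2 * v2) 0) as [Z|NZ].
  - exists 0, 1, 0; split; nra.
  - assert (P : 0 < v1 * v1 + v2 * v2) by nra.
    set (n := sqrt (v1 * v1 + v2 * v2)).
    assert (Hn2 : n * n = v1 * v1 + v2 * v2) by (apply sqrt_sqrt; lra).
    assert (Hn0 : n <> 0) by (intro Z; rewrite Z in Hn2; lra).
    exists 0, (v2 / n), (- v1 / n); split; [|field; auto].
    transitivity ((v1 * v1 + v2 * v2) / (n * n)); [field; auto|rewrite Hn2; field; lra].
Qed.

Lemma unit_orth_completion v : sum3 (fun i => v i * v i) = 1 ->
  exists Q, orth Q /\ forall i, (i < 3)%nat -> Q i 0%nat = v i.
Proof.
  unfold sum3; intros Hv.
  destruct (unit_orthogonal _ _ _ Hv) as [w0 [w1 [w2 [Hw Hvw]]]].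
  set (v0 := v 0%nat) in *; set (v1 := v 1%nat) in *; set (v2 := v 2%nat) in *.
  exists (mk3 v0 w0 (v1 * w2 - v2 * w1) v1 w1 (v2 * w0 - v0 * w2) v2 w2 (v0 * w1 - v1 * w0)).
  split.
  - unfold orth; idx3; unfold mmul, transp, mk3, id3, sum3; simpl; try lra; try ring.
    transitivity ((v0 * v0 + v1 * v1 + v2 * v2) * (w0 * w0 + w1 * w1 + w2 * w2)
                  - (v0 * w0 + v1 * w1 + v2 * w2) ^ 2); [ring|rewrite Hv, Hw, Hvw; ring].
  - intros i Hi; destruct i as [|[|[|i]]]; [| | |lia]; reflexivity.
Qed.

Lemma sym_conj U Q : sym U -> sym (mmul (mmul (transp Q) U) Q).
Proof.
  intros sU i j Hi Hj; unfold mmul, transp, sum3.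
  rewrite (sU 1%nat 0%nat), (sU 2%nat 0%nat), (sU 2%nat 1%nat) by lia; ring.
Qed.

Lemma eigvec_deflate U Q lam :
  orth Q -> (forall i, (i < 3)%nat -> mvec U (fun k => Q k 0%nat) i = lam * Q i 0%nat) ->
  forall i, (i < 3)%nat -> mmul (mmul (transp Q) U) Q i 0%nat = lam * id3 i 0%nat.
Proof.
  intros HQ HU i Hi; rewrite <- (HQ i 0%nat Hi ltac:(lia)).
  transitivity (sum3 (fun a => Q a i * mvec U (fun k => Q k 0%nat) a)).
  - unfold mmul, mvec, transp, sum3; ring.
  - unfold sum3; rewrite !HU by lia; unfold mmul, transp, sum3; ring.
Qed.

(* Jacobi rotation: with t = s/c, the off-diagonal entry vanishes iff
   b t^2 + (a - g) t - b = 0, which has a real root. *)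
Lemma jacobi_rotation a b g : exists c s, c * c + s * s = 1 /\
  - (c * s * a) + (c * c - s * s) * b + c * s * g = 0.
Proof.
  destruct (Req_dec b 0) as [Z|NZ].
  - exists 1, 0; subst; split; ring.
  - assert (Hs : 0 <= ((a - g) / 2) ^ 2 + b ^ 2)
      by (pose proof (pow2_ge_0 ((a - g) / 2)); pose proof (pow2_ge_0 b); lra).
    set (y := (g - a) / 2 + sqrt (((a - g) / 2) ^ 2 + b ^ 2)).
    assert (Hy : y * y + (a - g) * y - b * b = 0).
    { pose proof (sqrt_sqrt _ Hs); unfold y; nra. }
    assert (Hb2 : 0 < b * b) by (apply Rsqr_pos_lt; auto).
    assert (Hn : 0 < b * b + y * y) by nra.
    set (n := sqrt (b * b + y * y)).
    assert (Hn2 : n * n = b * b + y * y) by (apply sqrt_sqrt; lra).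
    assert (Hn0 : n <> 0) by (intro Z; rewrite Z in Hn2; lra).
    exists (b / n), (y / n); split.
    + transitivity ((b * b + y * y) / (n * n)); [field; auto|rewrite Hn2; field; lra].
    + transitivity (- b * (y * y + (a - g) * y - b * b) / (n * n));
        [field; auto|rewrite Hy; field; auto].
Qed.

Lemma block_diagonalize B lam : sym B ->
  (forall i, (i < 3)%nat -> B i 0%nat = lam * id3 i 0%nat) ->
  exists Q l, orth Q /\ meq (mmul (mmul (transp Q) B) Q) (diag3 l).
Proof.
  intros sB HB.
  assert (b00 : B 0%nat 0%nat = lam) by (rewrite HB by lia; unfold id3; simpl; ring).
  assert (b10 : B 1%nat 0%nat = 0) by (rewrite HB by lia; unfold id3; simpl; ring).
  assert (b20 : B 2%nat 0%nat = 0) by (rewrite HB by lia; unfold id3; simpl; ring).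
  assert (b01 : B 0%nat 1%nat = 0) by (rewrite sB by lia; exact b10).
  assert (b02 : B 0%nat 2%nat = 0) by (rewrite sB by lia; exact b20).
  assert (b21 : B 2%nat 1%nat = B 1%nat 2%nat) by (apply sB; lia).
  destruct (jacobi_rotation (B 1%nat 1%nat) (B 1%nat 2%nat) (B 2%nat 2%nat)) as [c [s [Hcs Hoff]]].
  exists (mk3 1 0 0 0 c (- s) 0 s c),
    (dvec lam (c * c * B 1%nat 1%nat + 2 * c * s * B 1%nat 2%nat + s * s * B 2%nat 2%nat)
              (s * s * B 1%nat 1%nat - 2 * c * s * B 1%nat 2%nat + c * c * B 2%nat 2%nat)).
  split.
  - unfold orth; idx3; unfold mmul, transp, mk3, id3, sum3; simpl; try ring; lra.
  - idx3; unfold mmul, transp, mk3, diag3, dvec, sum3; simpl;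
      rewrite ?b00, ?b01, ?b02, ?b10, ?b20, ?b21; try ring;
      (etransitivity; [|exact Hoff]); ring.
Qed.

Lemma sym_diagonalize U : sym U ->
  exists Q l, orth Q /\ meq (mmul (mmul (transp Q) U) Q) (diag3 l).
Proof.
  intros sU.
  destruct (sym_unit_eigvec U sU) as [lam [v [Hv HUv]]].
  destruct (unit_orth_completion v Hv) as [Q1 [HQ1 Hcol]].
  assert (HUQ : forall i, (i < 3)%nat -> mvec U (fun k => Q1 k 0%nat) i = lam * Q1 i 0%nat).
  { intros i Hi; rewrite Hcol by auto; rewrite <- HUv by auto.
    unfold mvec, sum3; rewrite !Hcol by lia; reflexivity. }
  destruct (block_diagonalize (mmul (mmul (transp Q1) U) Q1) lam (sym_conj U Q1 sU)
              (eigvec_deflate U Q1 lam HQ1 HUQ)) as [Q2 [l [HQ2 HD]]].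
  exists (mmul Q1 Q2), l; split; [exact (orth_mmul _ _ HQ1 HQ2)|].
  rewrite <- HD, transp_mmul, !mmulA; reflexivity.
Qed.

Lemma spectral_exists U : psym U -> exists Q l, spectral U Q l.
Proof.
  intros [sU pU].
  destruct (sym_diagonalize U sU) as [Q [l [HQ HD]]].
  exists Q, l; split; [exact HQ|split].
  - intros i Hi.
    replace (l i) with (sum3 (fun a => sum3 (fun b => Q a i * U a b * Q b i))).
    + apply (pU (fun a => Q a i)); intros [z0 [z1 z2]].
      pose proof (HQ i i Hi Hi) as K; unfold mmul, transp, sum3, id3 in K.
      rewrite Nat.eqb_refl, z0, z1, z2 in K; lra.
    + pose proof (HD i i Hi Hi) as K; unfold diag3 in K; rewrite Nat.eqb_refl in K.
      rewrite <- K; unfold mmul, transp, sum3; ring.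
  - pose proof (orth_mmulT Q HQ) as HQ'.
    unfold qdiag; rewrite <- HD, !mmulA, HQ', mmulm1, <- mmulA, HQ', mmul1m; reflexivity.
Qed.

(** * The Hencky energy *)

Definition dsum (f : nat -> nat -> R) : R := sum3 (fun i => sum3 (fun j => f i j)).

Definition overlap (P Q : Mat) (i j : nat) : R := (mmul (transp P) Q i j) ^ 2.

Lemma inner_qdiag P a Q b :
  inner (qdiag P a) (qdiag Q b) = dsum (fun i j => a i * b j * overlap P Q i j).
Proof. unfold qdiag, overlap, dsum, inner, mtr, mmul, transp, diag3, sum3; simpl; ring. Qed.

Lemma orth_col_sq R0 j : orth R0 -> (j < 3)%nat -> sum3 (fun i => R0 i j ^ 2) = 1.
Proof.
  intros HR Hj; pose proof (HR j j Hj Hj) as E.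
  unfold mmul, transp, id3, sum3 in *; rewrite Nat.eqb_refl in E; simpl; lra.
Qed.

Lemma orth_row_sq R0 i : orth R0 -> (i < 3)%nat -> sum3 (fun j => R0 i j ^ 2) = 1.
Proof. intros HR; apply (orth_col_sq (transp R0)), orth_transp, HR. Qed.

Lemma orth_transp_mmul P Q : orth P -> orth Q -> orth (mmul (transp P) Q).
Proof. intros HP HQ; apply orth_mmul; [apply orth_transp|]; auto. Qed.

Lemma overlap_col_sum P Q j : orth P -> orth Q -> (j < 3)%nat ->
  sum3 (fun i => overlap P Q i j) = 1.
Proof. intros HP HQ; apply orth_col_sq, orth_transp_mmul; auto. Qed.

Lemma overlap_row_sum P Q i : orth P -> orth Q -> (i < 3)%nat ->
  sum3 (fun j => overlap P Q i j) = 1.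
Proof. intros HP HQ; apply orth_row_sq, orth_transp_mmul; auto. Qed.

Lemma inner_qdiag_same P a b : orth P ->
  inner (qdiag P a) (qdiag P b) = sum3 (fun i => a i * b i).
Proof.
  intros HP; rewrite inner_qdiag; unfold overlap, dsum, sum3.
  rewrite !HP by lia; unfold id3; simpl; ring.
Qed.

Lemma dsum_marginals w a b :
  (forall j, (j < 3)%nat -> sum3 (fun i => w i j) = 1) ->
  (forall i, (i < 3)%nat -> sum3 (fun j => w i j) = 1) ->
  dsum (fun i j => w i j * (a i + b j)) = sum3 a + sum3 b.
Proof.
  intros Hc Hr.
  pose proof (Hc 0%nat ltac:(lia)) as c0; pose proof (Hc 1%nat ltac:(lia)) as c1;
  pose proof (Hc 2%nat ltac:(lia)) as c2.
  pose proof (Hr 0%nat ltac:(lia)) as r0; pose proof (Hr 1%nat ltac:(lia)) as r1;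
  pose proof (Hr 2%nat ltac:(lia)) as r2.
  unfold dsum, sum3 in *.
  transitivity (a 0%nat * (w 0%nat 0%nat + w 0%nat 1%nat + w 0%nat 2%nat)
              + a 1%nat * (w 1%nat 0%nat + w 1%nat 1%nat + w 1%nat 2%nat)
              + a 2%nat * (w 2%nat 0%nat + w 2%nat 1%nat + w 2%nat 2%nat)
              + b 0%nat * (w 0%nat 0%nat + w 1%nat 0%nat + w 2%nat 0%nat)
              + b 1%nat * (w 0%nat 1%nat + w 1%nat 1%nat + w 2%nat 1%nat)
              + b 2%nat * (w 0%nat 2%nat + w 1%nat 2%nat + w 2%nat 2%nat)); [ring|].
  simpl in *; rewrite r0, r1, r2, c0, c1, c2; ring.
Qed.

Definition mentropy (U : Mat) : R := inner U (fun i j => mlog U i j - id3 i j).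

Lemma mentropy_spectral U Q l : spectral U Q l ->
  mentropy U = sum3 (fun i => l i * (ln (l i) - 1)).
Proof.
  intros HS; pose proof HS as [HQ [_ HU]].
  assert (HL : meq (fun i j => mlog U i j - id3 i j) (qdiag Q (fun i => ln (l i) - 1))).
  { intros i j Hi Hj; rewrite (mlog_spectral U Q l HS), (id3_qdiag Q HQ) by auto.
    unfold qdiag, mmul, diag3, transp, sum3; simpl; ring. }
  unfold mentropy; rewrite HU, HL; apply inner_qdiag_same, HQ.
Qed.

Lemma ln_sub_ln_le x y : 0 < x -> 0 < y -> ln x - ln y <= x / y - 1.
Proof.
  intros Hx Hy; pose proof (exp_ineq1_le (ln (x / y))) as E.
  rewrite exp_ln in E by (apply Rdiv_lt_0_compat; lra).
  unfold Rdiv in *; rewrite ln_mult, ln_Rinv in E by (try apply Rinv_0_lt_compat; lra); lra.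
Qed.

Definition rel_entropy (u v : R) : R := v * ln v - v * ln u - v + u.

Lemma rel_entropy_bounds u v : 0 < u -> 0 < v ->
  0 <= rel_entropy u v <= (v - u) ^ 2 / u.
Proof.
  intros Hu Hv.
  pose proof (ln_sub_ln_le v u Hv Hu) as Hvu; pose proof (ln_sub_ln_le u v Hu Hv) as Huv.
  apply (Rmult_le_compat_l v) in Hvu; [|lra].
  apply (Rmult_le_compat_l v) in Huv; [|lra].
  replace (v * (v / u - 1)) with (v * v / u - v) in Hvu by (field; lra).
  replace (v * (u / v - 1)) with (u - v) in Huv by (field; lra).
  replace ((v - u) ^ 2 / u) with (v * v / u - 2 * v + u) by (field; lra).
  unfold rel_entropy; split; lra.
Qed.

Lemma mentropy_expansion U H P u Q v :
  spectral U P u -> spectral (madd U H) Q v ->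
  mentropy (madd U H) - mentropy U - inner (mlog U) H
    = dsum (fun i j => overlap P Q i j * rel_entropy (u i) (v j)) /\
  inner H H = dsum (fun i j => overlap P Q i j * (v j - u i) ^ 2).
Proof.
  intros SU SV; pose proof SU as [HP [_ HU]]; pose proof SV as [HQ [_ HV]].
  rewrite (mentropy_spectral _ _ _ SU), (mentropy_spectral _ _ _ SV).
  pose proof (mlog_spectral _ _ _ SU) as HL.
  set (V := madd U H) in *; set (L := mlog U) in *.
  assert (EL : inner L H = inner L V - inner L U)
    by (unfold V, inner, mtr, mmul, transp, madd, sum3; ring).
  assert (EH : inner H H = inner V V - 2 * inner U V + inner U U)
    by (unfold V, inner, mtr, mmul, transp, madd, sum3; ring).
  rewrite EL, EH; clearbody V L.
  change (meq U (qdiag P u)) in HU; change (meq V (qdiag Q v)) in HV.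
  rewrite HL, HU, HV, !inner_qdiag_same, !inner_qdiag by auto.
  assert (Hc := fun j => overlap_col_sum P Q j HP HQ).
  assert (Hr := fun i => overlap_row_sum P Q i HP HQ).
  pose proof (dsum_marginals _ u (fun j => v j * ln (v j) - v j) Hc Hr) as M1.
  pose proof (dsum_marginals _ (fun i => u i ^ 2) (fun j => v j ^ 2) Hc Hr) as M2.
  split.
  - transitivity (dsum (fun i j => overlap P Q i j * (u i + (v j * ln (v j) - v j)))
                  - dsum (fun i j => ln (u i) * v j * overlap P Q i j)).
    + rewrite M1; unfold dsum, sum3; ring.
    + unfold dsum, rel_entropy, sum3; ring.
  - transitivity (dsum (fun i j => overlap P Q i j * (u i ^ 2 + v j ^ 2))
                  - 2 * dsum (fun i j => u i * v j * overlap P Q i j)).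
    + rewrite M2; unfold dsum, sum3; ring.
    + unfold dsum, sum3; ring.
Qed.

Lemma mentropy_remainder_bound U H P u Q v m :
  spectral U P u -> spectral (madd U H) Q v -> 0 < m -> (forall i, (i < 3)%nat -> m <= u i) ->
  0 <= mentropy (madd U H) - mentropy U - inner (mlog U) H <= fnorm H ^ 2 / m.
Proof.
  intros SU SV Hm Hmu.
  destruct (mentropy_expansion U H P u Q v SU SV) as [E1 E2].
  rewrite E1, fnorm_sq, E2.
  assert (Hb : forall i j, (i < 3)%nat -> (j < 3)%nat ->
    0 <= overlap P Q i j * rel_entropy (u i) (v j) <= overlap P Q i j * (v j - u i) ^ 2 / m).
  { intros i j Hi Hj.
    pose proof (proj1 (proj2 SU) i Hi) as Hu; pose proof (proj1 (proj2 SV) j Hj) as Hv.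
    pose proof (rel_entropy_bounds (u i) (v j) Hu Hv) as [B0 B1].
    assert (Hw : 0 <= overlap P Q i j) by apply pow2_ge_0.
    assert ((v j - u i) ^ 2 / u i <= (v j - u i) ^ 2 / m).
    { apply Rmult_le_compat_l; [apply pow2_ge_0|apply Rinv_le_contravar; auto]. }
    unfold Rdiv in *; split; [apply Rmult_le_pos; auto|].
    rewrite Rmult_assoc; apply Rmult_le_compat_l; lra. }
  unfold dsum, sum3; unfold Rdiv in *.
  pose proof (Hb 0%nat 0%nat ltac:(lia) ltac:(lia)); pose proof (Hb 0%nat 1%nat ltac:(lia) ltac:(lia));
  pose proof (Hb 0%nat 2%nat ltac:(lia) ltac:(lia)); pose proof (Hb 1%nat 0%nat ltac:(lia) ltac:(lia));
  pose proof (Hb 1%nat 1%nat ltac:(lia) ltac:(lia)); pose proof (Hb 1%nat 2%nat ltac:(lia) ltac:(lia));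
  pose proof (Hb 2%nat 0%nat ltac:(lia) ltac:(lia)); pose proof (Hb 2%nat 1%nat ltac:(lia) ltac:(lia));
  pose proof (Hb 2%nat 2%nat ltac:(lia) ltac:(lia)).
  split; [lra|]. rewrite !Rmult_plus_distr_r; lra.
Qed.

Definition hencky (G : R) (U : Mat) : R := 2 * G * (mentropy U + 3).

Lemma spectral_lower_bound U Q l : spectral U Q l ->
  exists m, 0 < m /\ forall i, (i < 3)%nat -> m <= l i.
Proof.
  intros [_ [Hl _]]; exists (Rmin (l 0%nat) (Rmin (l 1%nat) (l 2%nat))); split.
  - repeat apply Rmin_pos; apply Hl; lia.
  - intros i Hi; destruct i as [|[|[|i]]]; [| | |lia].
    + apply Rmin_l.
    + eapply Rle_trans; [apply Rmin_r|apply Rmin_l].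
    + eapply Rle_trans; [apply Rmin_r|apply Rmin_r].
Qed.

Lemma hencky_deriv G U : psym U -> has_sym_deriv (hencky G) U (Tmap G 0 U).
Proof.
  intros pU; destruct (spectral_exists U pU) as [P [u SU]].
  destruct (spectral_lower_bound U P u SU) as [m [Hm Hmu]].
  intros eps Heps; pose proof (Rabs_pos G) as HG.
  exists (eps * m / (2 * Rabs G + 1)); split; [apply Rdiv_lt_0_compat; nra|].
  intros H _ pV Hn; destruct (spectral_exists _ pV) as [Q [v SV]].
  pose proof (mentropy_remainder_bound U H P u Q v m SU SV Hm Hmu) as [B0 B1].
  pose proof (sqrt_pos (inner H H)) as Hn0; fold (fnorm H) in Hn0.
  replace (hencky G (madd U H) - hencky G U - inner (Tmap G 0 U) H)
    with (2 * G * (mentropy (madd U H) - mentropy U - inner (mlog U) H))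
    by (unfold hencky, Tmap, inner, mtr, mmul, transp, sum3; ring).
  rewrite Rabs_mult, (Rabs_right (_ - _ - _)) by lra.
  rewrite Rabs_mult, (Rabs_right 2) by lra.
  apply Rle_trans with (2 * Rabs G * (fnorm H ^ 2 / m)); [apply Rmult_le_compat_l; lra|].
  assert (Hd : fnorm H * (2 * Rabs G + 1) <= eps * m).
  { apply Rlt_le; apply (Rmult_lt_compat_r (2 * Rabs G + 1)) in Hn; [|lra].
    replace (eps * m / (2 * Rabs G + 1) * (2 * Rabs G + 1)) with (eps * m) in Hn by (field; lra).
    exact Hn. }
  apply (Rmult_le_reg_r m); [exact Hm|].
  replace (2 * Rabs G * (fnorm H ^ 2 / m) * m) with (fnorm H * (2 * Rabs G * fnorm H)) by (field; lra).
  nra.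
Qed.

(** * Calculus along segments *)

Definition is_deriv01 (g : R -> R) (t c : R) : Prop :=
  forall eps, 0 < eps -> exists d, 0 < d /\
    forall s, 0 <= t + s <= 1 -> Rabs s < d -> Rabs (g (t + s) - g t - s * c) <= eps * Rabs s.

Definition clamp01 (x : R) : R := Rmax 0 (Rmin 1 x).

Lemma clamp01_in x : 0 <= clamp01 x <= 1.
Proof. unfold clamp01, Rmax, Rmin; repeat destruct Rle_dec; lra. Qed.

Lemma clamp01_lipschitz a b : Rabs (clamp01 a - clamp01 b) <= Rabs (a - b).
Proof.
  unfold clamp01, Rmax, Rmin; repeat destruct Rle_dec; unfold Rabs; repeat destruct Rcase_abs; lra.
Qed.

Lemma clamp01_id x : 0 <= x <= 1 -> clamp01 x = x.
Proof. intros; unfold clamp01, Rmax, Rmin; repeat destruct Rle_dec; lra. Qed.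

(* Composing with the 1-Lipschitz retraction onto [0, 1] gives a function with zero
   derivative on all of R, to which the mean value theorem applies. *)
Lemma deriv01_zero_const g : (forall t, 0 <= t <= 1 -> is_deriv01 g t 0) -> g 1 = g 0.
Proof.
  intros Hg; set (h := fun x => g (clamp01 x)).
  assert (Hd : forall x, derivable_pt_lim h x 0).
  { intros x eps Heps.
    destruct (Hg (clamp01 x) (clamp01_in x) (eps / 2) ltac:(lra)) as [d [Hd Hs]].
    exists (mkposreal d Hd); intros k Hk0 Hk; simpl in Hk.
    set (s := clamp01 (x + k) - clamp01 x).
    assert (Hsk : Rabs s <= Rabs k)
      by (unfold s; replace k with ((x + k) - x) at 2 by ring; apply clamp01_lipschitz).
    assert (Hs01 : 0 <= clamp01 x + s <= 1)
      by (unfold s; replace (clamp01 x + _) with (clamp01 (x + k)) by ring; apply clamp01_in).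
    pose proof (Hs s Hs01 ltac:(lra)) as K.
    unfold h; replace (clamp01 (x + k)) with (clamp01 x + s) by (unfold s; ring).
    assert (Hk1 : 0 < Rabs k) by (apply Rabs_pos_lt; auto).
    rewrite Rminus_0_r; unfold Rdiv; rewrite Rabs_mult, Rabs_inv.
    apply (Rmult_lt_reg_r (Rabs k)); [lra|].
    rewrite Rmult_assoc, Rinv_l by lra.
    pose proof (Rabs_pos s); rewrite Rmult_0_r, Rminus_0_r in K; nra. }
  pose proof (null_derivative_1 h (fun x => exist _ 0 (Hd x)) (fun x => eq_refl) 1 0) as C.
  unfold h in C; rewrite !clamp01_id in C by lra; exact C.
Qed.

Lemma deriv01_sub g1 g2 t c1 c2 : is_deriv01 g1 t c1 -> is_deriv01 g2 t c2 ->
  is_deriv01 (fun x => g1 x - g2 x) t (c1 - c2).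
Proof.
  intros H1 H2 eps Heps.
  destruct (H1 (eps / 2) ltac:(lra)) as [d1 [Hd1 B1]].
  destruct (H2 (eps / 2) ltac:(lra)) as [d2 [Hd2 B2]].
  exists (Rmin d1 d2); split; [apply Rmin_pos; auto|].
  intros s Hts Hs.
  pose proof (B1 s Hts (Rlt_le_trans _ _ _ Hs (Rmin_l _ _))) as K1.
  pose proof (B2 s Hts (Rlt_le_trans _ _ _ Hs (Rmin_r _ _))) as K2.
  replace (g1 (t + s) - g2 (t + s) - (g1 t - g2 t) - s * (c1 - c2))
    with ((g1 (t + s) - g1 t - s * c1) + - (g2 (t + s) - g2 t - s * c2)) by ring.
  eapply Rle_trans; [apply Rabs_triang|]; rewrite Rabs_Ropp; lra.
Qed.

Lemma deriv01_increment_eq g1 g2 (c : R -> R) :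
  (forall t, 0 <= t <= 1 -> is_deriv01 g1 t (c t)) ->
  (forall t, 0 <= t <= 1 -> is_deriv01 g2 t (c t)) ->
  g1 1 - g1 0 = g2 1 - g2 0.
Proof.
  intros H1 H2.
  assert (E : (fun x => g1 x - g2 x) 1 = (fun x => g1 x - g2 x) 0).
  { apply (deriv01_zero_const (fun x => g1 x - g2 x)); intros t Ht.
    replace 0 with (c t - c t) by ring; apply deriv01_sub; auto. }
  simpl in E; lra.
Qed.

Lemma deriv01_of_derivable_pt_lim F t c : derivable_pt_lim F t c -> is_deriv01 F t c.
Proof.
  intros HF eps Heps; destruct (HF eps Heps) as [d Hd].
  exists d; split; [apply cond_pos|]; intros s _ Hs.
  destruct (Req_dec s 0) as [->|NZ].
  - rewrite Rplus_0_r, Rabs_R0, Rmult_0_l, Rminus_0_r, Rminus_diag, Rabs_R0; lra.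
  - replace (F (t + s) - F t - s * c) with (s * ((F (t + s) - F t) / s - c)) by (field; auto).
    rewrite Rabs_mult, Rmult_comm; apply Rmult_le_compat_r; [apply Rabs_pos|].
    apply Rlt_le, Hd; auto.
Qed.

Definition seg (A D : Mat) (t : R) : Mat := fun i j => A i j + t * D i j.
Definition mscale (s : R) (D : Mat) : Mat := fun i j => s * D i j.

Lemma fnorm_mscale s D : fnorm (mscale s D) = Rabs s * fnorm D.
Proof.
  unfold fnorm; replace (inner (mscale s D) (mscale s D)) with (Rsqr s * inner D D)
    by (unfold Rsqr, inner, mtr, mmul, transp, mscale, sum3; ring).
  rewrite sqrt_mult_alt by apply Rle_0_sqr; rewrite sqrt_Rsqr_abs; reflexivity.
Qed.

Lemma deriv01_segment W A D T t : sym D ->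
  (forall s, 0 <= s <= 1 -> psym (seg A D s)) -> has_sym_deriv W (seg A D t) T ->
  is_deriv01 (fun s => W (seg A D s)) t (inner T D).
Proof.
  intros sD pS HW eps Heps.
  pose proof (sqrt_pos (inner D D)) as Hf; fold (fnorm D) in Hf.
  destruct (HW (eps / (fnorm D + 1))) as [d [Hd HB]]; [apply Rdiv_lt_0_compat; lra|].
  exists (d / (fnorm D + 1)); split; [apply Rdiv_lt_0_compat; lra|].
  intros s Hts Hs.
  assert (Hseg : madd (seg A D t) (mscale s D) = seg A D (t + s))
    by (extensionality i; extensionality j; unfold madd, seg, mscale; ring).
  assert (Hsd : Rabs s * fnorm D < d).
  { apply (Rmult_lt_compat_r (fnorm D + 1)) in Hs; [|lra].
    replace (d / (fnorm D + 1) * (fnorm D + 1)) with d in Hs by (field; lra).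
    pose proof (Rabs_pos s); nra. }
  specialize (HB (mscale s D) ltac:(intros i j Hi Hj; unfold mscale; rewrite sD; auto)).
  rewrite Hseg, fnorm_mscale in HB; specialize (HB (pS _ Hts) Hsd).
  replace (s * inner T D) with (inner T (mscale s D))
    by (unfold inner, mtr, mmul, transp, mscale, sum3; ring).
  eapply Rle_trans; [exact HB|].
  pose proof (Rabs_pos s).
  apply Rle_trans with (eps * Rabs s * (fnorm D / (fnorm D + 1))); [right; field; lra|].
  rewrite <- (Rmult_1_r (eps * Rabs s)) at 2; apply Rmult_le_compat_l; [nra|].
  apply (Rmult_le_reg_r (fnorm D + 1)); [lra|].
  replace (fnorm D / (fnorm D + 1) * (fnorm D + 1)) with (fnorm D) by (field; lra); lra.
Qed.

(** * Potentials of the stress *)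

Lemma psym_segment A B t : psym A -> psym B -> 0 <= t <= 1 ->
  psym (seg A (fun i j => B i j - A i j) t).
Proof.
  intros [sA pA] [sB pB] Ht; split.
  - intros i j Hi Hj; unfold seg; rewrite sA, sB by auto; reflexivity.
  - intros x Hx; specialize (pA x Hx); specialize (pB x Hx).
    replace (sum3 (fun i => sum3 (fun j => x i * seg A (fun i j => B i j - A i j) t i j * x j)))
      with ((1 - t) * sum3 (fun i => sum3 (fun j => x i * A i j * x j))
            + t * sum3 (fun i => sum3 (fun j => x i * B i j * x j)))
      by (unfold seg, sum3; ring).
    nra.
Qed.

Lemma psym_id3 : psym id3.
Proof. apply (psym_diag3 (fun _ => 1)); intros; lra. Qed.

Lemma hencky_id3 G : hencky G id3 = 0.
Proof.
  unfold hencky; rewrite (mentropy_spectral id3 id3 (fun _ => 1)).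
  - unfold sum3; rewrite ln_1; ring.
  - apply (spectral_diag3 (fun _ => 1)); intros; lra.
Qed.

Lemma potential_unique G W : (forall U, psym U -> has_sym_deriv W U (Tmap G 0 U)) ->
  W id3 = 0 -> forall U, psym U -> W U = hencky G U.
Proof.
  intros HW HW1 U pU.
  set (D := fun i j => U i j - id3 i j).
  assert (sD : sym D).
  { intros i j Hi Hj; unfold D; rewrite (proj1 pU i j Hi Hj).
    unfold id3; rewrite Nat.eqb_sym; reflexivity. }
  assert (pS : forall t, 0 <= t <= 1 -> psym (seg id3 D t))
    by (intros; apply psym_segment; auto using psym_id3).
  assert (E1 : seg id3 D 1 = U) by (extensionality i; extensionality j; unfold seg, D; ring).
  assert (E0 : seg id3 D 0 = id3) by (extensionality i; extensionality j; unfold seg; ring).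
  pose proof (deriv01_increment_eq (fun t => W (seg id3 D t)) (fun t => hencky G (seg id3 D t))
                (fun t => inner (Tmap G 0 (seg id3 D t)) D)) as K.
  simpl in K; rewrite E1, E0, HW1, hencky_id3 in K.
  enough (W U - 0 = hencky G U - 0) by lra.
  apply K; intros t Ht; apply deriv01_segment; auto using hencky_deriv.
Qed.

Definition unitv (k i : nat) : R := if Nat.eqb i k then 1 else 0.

Definition xlnx_sub (x : R) : R := x * ln x - x.

Lemma xlnx_sub_deriv x : 0 < x -> derivable_pt_lim xlnx_sub x (ln x).
Proof.
  intros Hx.
  replace (ln x) with ((1 * ln x + x * / x) - 1) by (field; lra).
  apply (derivable_pt_lim_minus (id * ln)%F id).
  - apply derivable_pt_lim_mult; [apply derivable_pt_lim_id|apply derivable_pt_lim_ln; exact Hx].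
  - apply derivable_pt_lim_id.
Qed.

Lemma xlnx_sub_affine_deriv a b t : 0 < a + t * b ->
  derivable_pt_lim (fun s => xlnx_sub (a + s * b)) t (ln (a + t * b) * b).
Proof.
  intros Hp.
  apply (derivable_pt_lim_comp (fun s => a + s * b) xlnx_sub); [|exact (xlnx_sub_deriv _ Hp)].
  assert (D : derivable_pt_lim (fct_cte a + id * fct_cte b)%F t (0 + (1 * b + t * 0))).
  { apply derivable_pt_lim_plus; [apply derivable_pt_lim_const|].
    apply derivable_pt_lim_mult; [apply derivable_pt_lim_id|apply derivable_pt_lim_const]. }
  replace (0 + (1 * b + t * 0)) with b in D by ring; exact D.
Qed.

Lemma inner_Tmap_diag3 G Lam m d : (forall i, (i < 3)%nat -> 0 < m i) ->
  inner (Tmap G Lam (diag3 m)) (diag3 d)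
    = sum3 (fun i => d i * (2 * G * ln (m i) + Lam * sum3 (fun j => ln (m j)))).
Proof.
  intros Hm; pose proof (mlog_diag3 m Hm) as HL.
  unfold Tmap, inner, mtr, mmul, transp, diag3, id3, sum3 in *; simpl.
  rewrite !HL by lia; unfold diag3; simpl; ring.
Qed.

Lemma seg_diag3 a d t : seg (diag3 a) (diag3 d) t = diag3 (fun i => a i + t * d i).
Proof.
  extensionality i; extensionality j; unfold seg, diag3.
  destruct (Nat.eqb i j); ring.
Qed.

Definition corner (a b : R) : Mat := diag3 (dvec a b 1).

Section StressPotential.
Variables (G Lam : R) (W : Mat -> R).
Hypothesis HW : forall U, psym U -> has_sym_deriv W U (Tmap G Lam U).

(* On diagonal matrices the logarithm is diagonal, so the stress power along a coordinate
   direction has an explicit antiderivative. *)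
Lemma potential_diag_step l k al : (forall i, (i < 3)%nat -> 0 < l i) -> (k < 3)%nat -> 0 <= al ->
  W (diag3 (fun i => l i + al * unitv k i)) - W (diag3 l)
    = (2 * G + Lam) * (xlnx_sub (l k + al) - xlnx_sub (l k))
      + Lam * al * (sum3 (fun i => ln (l i)) - ln (l k)).
Proof.
  intros Hl Hk Hal.
  set (D := diag3 (fun i => al * unitv k i)).
  set (S := sum3 (fun i => ln (l i)) - ln (l k)).
  set (F := fun t => (2 * G + Lam) * xlnx_sub (l k + t * al) + Lam * al * S * t).
  assert (Hpos : forall t, 0 <= t -> forall i, (i < 3)%nat -> 0 < l i + t * (al * unitv k i)).
  { intros t Ht i Hi; apply Rplus_lt_le_0_compat; [auto|].
    repeat apply Rmult_le_pos; auto; unfold unitv; destruct Nat.eqb; lra. }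
  assert (pS : forall t, 0 <= t <= 1 -> psym (seg (diag3 l) D t))
    by (intros t Ht; unfold D; rewrite seg_diag3; apply psym_diag3, Hpos; lra).
  assert (K : W (seg (diag3 l) D 1) - W (seg (diag3 l) D 0) = F 1 - F 0).
  { apply (deriv01_increment_eq (fun t => W (seg (diag3 l) D t)) F
             (fun t => inner (Tmap G Lam (seg (diag3 l) D t)) D)); intros t Ht.
    - apply deriv01_segment; [unfold D, sym; idx3; reflexivity|exact pS|apply HW, pS, Ht].
    - apply deriv01_of_derivable_pt_lim.
      assert (DF : derivable_pt_lim F t
                     ((2 * G + Lam) * (ln (l k + t * al) * al) + Lam * al * S * 1)).
      { apply (derivable_pt_lim_plus (mult_real_fct (2 * G + Lam) (fun s => xlnx_sub (l k + s * al)))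
                 (mult_real_fct (Lam * al * S) id)).
        - apply derivable_pt_lim_scal, xlnx_sub_affine_deriv.
          pose proof (Hpos t (proj1 Ht) k Hk) as P; unfold unitv in P; rewrite Nat.eqb_refl in P; lra.
        - apply derivable_pt_lim_scal, derivable_pt_lim_id. }
      unfold D; rewrite seg_diag3, inner_Tmap_diag3 by (apply Hpos; lra).
      replace (sum3 _) with ((2 * G + Lam) * (ln (l k + t * al) * al) + Lam * al * S * 1); [exact DF|].
      unfold S; destruct k as [|[|[|k]]]; [| | |lia];
        unfold sum3, unitv; simpl; rewrite !Rmult_0_r, !Rmult_1_r, !Rplus_0_r; ring. }
  unfold D in K; rewrite !seg_diag3 in K.
  replace (fun i => l i + 0 * (al * unitv k i)) with l in K by (extensionality i; ring).
  replace (fun i => l i + 1 * (al * unitv k i)) with (fun i => l i + al * unitv k i) in K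
    by (extensionality i; ring).
  rewrite K; unfold F; rewrite Rmult_0_l, Rmult_1_l, Rplus_0_r, Rmult_0_r; ring.
Qed.

Lemma corner_step_a a b al : 0 < a -> 0 < b -> 0 <= al ->
  W (corner (a + al) b) - W (corner a b)
    = (2 * G + Lam) * (xlnx_sub (a + al) - xlnx_sub a) + Lam * al * ln b.
Proof.
  intros Ha Hb Hal.
  pose proof (potential_diag_step (dvec a b 1) 0 al (dvec_pos a b 1 Ha Hb Rlt_0_1) ltac:(lia) Hal)
    as K.
  replace (fun i => dvec a b 1 i + al * unitv 0 i) with (dvec (a + al) b 1) in K
    by (extensionality i; destruct i as [|[|]]; unfold unitv; simpl; ring).
  unfold corner; rewrite K; unfold sum3; simpl; rewrite ln_1; ring.
Qed.

Lemma corner_step_b a b be : 0 < a -> 0 < b -> 0 <= be ->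
  W (corner a (b + be)) - W (corner a b)
    = (2 * G + Lam) * (xlnx_sub (b + be) - xlnx_sub b) + Lam * be * ln a.
Proof.
  intros Ha Hb Hbe.
  pose proof (potential_diag_step (dvec a b 1) 1 be (dvec_pos a b 1 Ha Hb Rlt_0_1) ltac:(lia) Hbe)
    as K.
  replace (fun i => dvec a b 1 i + be * unitv 1 i) with (dvec a (b + be) 1) in K
    by (extensionality i; destruct i as [|[|]]; unfold unitv; simpl; ring).
  unfold corner; rewrite K; unfold sum3; simpl; rewrite ln_1; ring.
Qed.

Lemma stress_potential_Lam0 : Lam = 0.
Proof.
  pose proof (corner_step_a 1 1 1 Rlt_0_1 Rlt_0_1 ltac:(lra)) as e1.
  pose proof (corner_step_b 2 1 2 ltac:(lra) Rlt_0_1 ltac:(lra)) as e2.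
  pose proof (corner_step_b 1 1 2 Rlt_0_1 Rlt_0_1 ltac:(lra)) as e3.
  pose proof (corner_step_a 1 3 1 Rlt_0_1 ltac:(lra) ltac:(lra)) as e4.
  replace (1 + 1) with 2 in * by ring; replace (1 + 2) with 3 in * by ring.
  rewrite ln_1 in *.
  assert (Hln : ln 3 < 2 * ln 2).
  { replace (2 * ln 2) with (ln (2 * 2)) by (rewrite ln_mult; lra).
    apply ln_increasing; lra. }
  assert (E : Lam * (2 * ln 2 - ln 3) = 0) by lra.
  apply Rmult_integral in E as [E|E]; lra.
Qed.
End StressPotential.

Theorem mainTheorem13 (G Lam : R) (hG : G <> 0) :
  ((exists W : Mat -> R,
      forall U, psym U -> has_sym_deriv W U (Tmap G Lam U)) <-> Lam = 0) /\
  (Lam = 0 ->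
   forall W : Mat -> R,
     (forall U, psym U -> has_sym_deriv W U (Tmap G Lam U)) ->
     W id3 = 0 ->
     forall U, psym U ->
       W U = 2 * G * (inner U (fun i j => mlog U i j - id3 i j) + 3) /\
       (forall Q l, spectral U Q l ->
          W U = 2 * G * sum3 (fun i => l i * (ln (l i) - 1)) + 6 * G)).
Proof.
  split; [split|].
  - intros [W HW]; exact (stress_potential_Lam0 G Lam W HW).
  - intros ->; exists (hencky G); intros U pU; apply hencky_deriv, pU.
  - intros -> W HW HW1 U pU.
    rewrite (potential_unique G W HW HW1 U pU); split; [reflexivity|].
    intros Q l HS; unfold hencky; rewrite (mentropy_spectral U Q l HS); ring.
Qed.
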